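(* Let $\mathcal{A}$ be an attacker, $W$ a world, $m\in\mathbb{N}$, $\Sigma,\Sigma'$ lock sets, $\tau,\tau'$ labeled types and $e,e'$ expressions. If $(e,e',W,\Sigma,\Sigma',m)\in\mathcal{E}^{\mathcal{A}}[\![\tau']\!]$, $\Sigma\approx_{\mathcal{A}}\Sigma'$, $\tau'|_{\Sigma}<:\tau$ and $\tau'|_{\Sigma'}<:\tau$, then $(\mathsf{new}(e,\tau),\mathsf{new}(e',\tau),W,\Sigma,\Sigma',m)\in\mathcal{E}^{\mathcal{A}}[\![(\mathsf{ref}\,\tau)^{\bot}]\!]$.
   Context: **Policies.** Fix a set of actors $a$ and a set of locks $\sigma$. A lock set $\Sigma$ is a set of locks. A clause is a pair $(\Sigma \Rightarrow a)$; a policy $p$ is a set of clauses. $p \sqsubseteq q$ iff for every $(\Sigma_2\Rightarrow a)\in q$ there is $(\Sigma_1\Rightarrow a)\in p$ with $\Sigma_1\subseteq\Sigma_2$. $\bot=\{(\emptyset\Rightarrow a)\mid a \text{ an actor}\}$. Specialization: $p|_\Sigma=\{(\Sigma_1\setminus\Sigma\Rightarrow a)\mid(\Sigma_1\Rightarrow a)\in p\}$. A fixed function $\mathrm{LockPolicy}$ assigns a policy to each lock. **Types.** Raw types $A ::= \mathsf{unit}\mid\mathsf{nat}\mid \tau_1+\tau_2\mid\tau_1\times\tau_2\mid \mathsf{ref}\,\tau\mid \tau_1\xrightarrow{\Sigma,p}\tau_2$; labeled types $\tau ::= A^p$. For $\tau=A^p$: $\tau\sqsubseteq q$ means $p\sqsubseteq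 q$; $\tau|_\Sigma = A^{p|_\Sigma}$. **Subtyping** $<:$: $A^p<:B^{p'}$ if $p\sqsubseteq p'$ and $A<:B$; $\mathsf{unit}<:\mathsf{unit}$; $\mathsf{nat}<:\mathsf{nat}$; $\mathsf{ref}\,\tau<:\mathsf{ref}\,\tau$; $\tau_0\times\tau_2<:\tau_1\times\tau_3$ and $\tau_0+\tau_2<:\tau_1+\tau_3$ if $\tau_0<:\tau_1,\tau_2<:\tau_3$; $\tau_1\xrightarrow{\Sigma,p}\tau_2<:\tau_0\xrightarrow{\Sigma',p'}\tau_3$ if $\tau_0<:\tau_1$, $\tau_2<:\tau_3$, $p'\sqsubseteq p$, $\Sigma\subseteq\Sigma'$. **Syntax.** Expressions: $x\mid ()\mid n\ (n\in\mathbb{N})\mid \lambda x.e\mid (e,e')\mid \mathsf{fst}(e)\mid\mathsf{snd}(e)\mid\mathsf{inl}(e)\mid\mathsf{inr}(e)\mid \mathsf{case}\ e\ \mathsf{of}\ \mathsf{inl}\,x\Rightarrow e'\mid\mathsf{inr}\,y\Rightarrow e''\mid e\,e'\mid \mathsf{new}(e,\tau)\mid\ !e\mid e:=e'\mid \mathsf{open}\ \sigma\ \mathsf{in}\ e\mid\mathsf{opened}\ \sigma\ \mathsf{in}\ e\mid\mathsf{close}\ \sigma\ \mathsf{in}\ e\mid\mathsf{closed}\ \sigma\ \mathsf{in}\ e\mid \mathsf{when}\ \sigma\ \mathsf{then}\ e\ \mathsf{else}\ e'\mid l$ ($l$ ranging over a countably infinite set of locations). Values: $v::=\lambda x.e\mid(v,v')\mid\mathsf{inl}(v)\mid\mathsf{inr}(v)\mid()\mid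 l\mid n$; $\mathcal{V}$ is the set of values. A state $S$ is a finite map from locations to pairs $(v,\tau)$; write $S(l)=v$, $\mathrm{type}(S,l)=\tau$. A state environment $\theta$ is a finite map from locations to labeled types; $\theta'\sqsupseteq\theta$ iff $\theta\subseteq\theta'$ as graphs. **Observations.** $\omega::=\varepsilon\mid \mathsf{wr}_{l,\tau}(v)\mid\mathsf{open}(\sigma)\mid\mathsf{close}(\sigma)\mid\mathsf{unopen}(\sigma)\mid\mathsf{unclose}(\sigma)$. $\mathrm{pol}(\mathsf{wr}_{l,A^p}(v))=p$; the policy of each of the four lock observations on $\sigma$ is $\mathrm{LockPolicy}(\sigma)$; $\mathrm{pol}(\varepsilon)$ is undefined. **Reduction** $e,\Sigma,S\to e',S',\omega,\Sigma'$ ($\Sigma$ = open locks, $\Sigma'$ = active lock set). Congruence rules (the premise step's $S',\omega,\Sigma'$ are propagated unchanged): reduce $e$ inside $\mathsf{new}(e,\tau)$, $!e$, $e:=e'$, $l:=e$, $e\,e'$, $(\lambda x.e)\,e$, $(e,e')$, $(v,e)$, $\mathsf{fst}(e)$, $\mathsf{snd}(e)$, $\mathsf{inl}(e)$, $\mathsf{inr}(e)$, and the scrutinee of $\mathsf{case}$, all with the same open-lock set $\Sigma$. Lock rules: $\mathsf{open}\ \sigma\ \mathsf{in}\ e,\Sigma,S\to \mathsf{opened}\ \sigma\ \mathsf{in}\ e,S,\mathsf{open}(\sigma),\Sigma$; if $e,\Sigma\cup\{\sigma\},S\to e',S',\omega,\Sigma'$ then $\mathsf{opened}\ \sigma\ \mathsf{in}\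 e,\Sigma,S\to\mathsf{opened}\ \sigma\ \mathsf{in}\ e',S',\omega,\Sigma'$; $\mathsf{opened}\ \sigma\ \mathsf{in}\ v,\Sigma,S\to v,S,\mathsf{unopen}(\sigma),\Sigma$; analogously for $\mathsf{close}/\mathsf{closed}$ with $\Sigma\setminus\{\sigma\}$ and observations $\mathsf{close}(\sigma)$, $\mathsf{unclose}(\sigma)$. If $\sigma\in\Sigma$ and $e,\Sigma,S\to e'',S',\omega,\Sigma'$ then $\mathsf{when}\ \sigma\ \mathsf{then}\ e\ \mathsf{else}\ e',\Sigma,S\to\mathsf{when}\ \sigma\ \mathsf{then}\ e''\ \mathsf{else}\ e',S',\omega,\Sigma'$; if $\sigma\notin\Sigma$ and $e',\Sigma,S\to e'',S',\omega,\Sigma'$ then it steps to $\mathsf{when}\ \sigma\ \mathsf{then}\ e\ \mathsf{else}\ e''$; if $\sigma\in\Sigma$, $\mathsf{when}\ \sigma\ \mathsf{then}\ v\ \mathsf{else}\ e'\to v$; if $\sigma\notin\Sigma$, $\mathsf{when}\ \sigma\ \mathsf{then}\ e\ \mathsf{else}\ v\to v$ (both with $S$ unchanged, $\varepsilon$, active set $\Sigma$). Base rules (state unchanged unless stated, active set $\Sigma$): $!l\to v$ with $\varepsilon$ if $S(l)=v$; $\mathsf{new}(v,\tau),\Sigma,S\to l,S\cup\{l\mapsto(v,\tau)\},\mathsf{wr}_{l,\tau}(v),\Sigma$ for any $l\notin\mathrm{dom}(S)$; $l:=v,\Sigma,S\to (),S[l\mapsto(v,\tau)],\mathsf{wr}_{l,\tau}(v),\Sigma$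 if $l\in\mathrm{dom}(S)$, $\mathrm{type}(S,l)=\tau$; $(\lambda x.e)\,v\to[v/x]e$, $\mathsf{fst}(v,v')\to v$, $\mathsf{snd}(v,v')\to v'$, $\mathsf{case}\ \mathsf{inl}(v)\ldots\to[v/x]e'$, $\mathsf{case}\ \mathsf{inr}(v)\ldots\to[v/y]e''$, all with $\varepsilon$. **Unary relation** (sets of triples, defined by well-founded recursion on the step index $m$). $(S,m)\triangleright\theta$ iff $\mathrm{dom}\,\theta\subseteq\mathrm{dom}\,S$ and for all $l\in\mathrm{dom}\,\theta$: $\theta(l)=\mathrm{type}(S,l)$ and $(S(l),\theta,m)\in\mathcal{V}[\![\theta(l)]\!]$. $\mathcal{V}[\![A^p]\!]=\mathcal{V}[\![A]\!]$; $\mathcal{V}[\![\mathsf{unit}]\!]=\{((),\theta,m)\}$; $\mathcal{V}[\![\mathsf{nat}]\!]=\{(n,\theta,m)\}$; pairs/sums componentwise; $\mathcal{V}[\![\mathsf{ref}\,\tau]\!]=\{(l,\theta,m)\mid\theta(l)=\tau\}$; $(\lambda x.e,\theta,m)\in\mathcal{V}[\![\tau_1\xrightarrow{\Sigma,pc}\tau_2]\!]$ iff for all $\theta'\sqsupseteq\theta$, $m'<m$, $v$ with $(v,\theta',m')\in\mathcal{V}[\![\tau_1]\!]$: $([v/x]e,\theta',m')\in\mathcal{E}^{pc}[\![\tau_2]\!]$. $\mathcal{E}^{pc}[\![\tau]\!]=\mathcal{V}[\![\tau]\!]\cup\{(e,\theta,m)\mid e\notin\mathcal{V}$ and for all $S,\theta'\sqsupseteq\theta,m'<m,e',S',\omega,\Sigma,\Sigma'$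 with $(S,m')\triangleright\theta'$ and $e,\Sigma,S\to e',S',\omega,\Sigma'$: ($\omega=\varepsilon$ or $pc\sqsubseteq\mathrm{pol}(\omega)$) and there is $\theta''\sqsupseteq\theta'$ with $(S',m')\triangleright\theta''$ and $(e',\theta'',m')\in\mathcal{E}^{pc}[\![\tau]\!]\}$. **Attackers.** An attacker $\mathcal{A}=(a,\Sigma_{\mathcal{A}})$; $p\sqsubseteq\mathcal{A}$ iff $p\sqsubseteq\{(\Sigma_{\mathcal{A}}\Rightarrow a)\}$ (for labeled types via their label); for a lock set, $\Sigma\sqsubseteq\mathcal{A}$ iff $\Sigma\subseteq\Sigma_{\mathcal{A}}$; by convention $\mathrm{pol}(\varepsilon)\not\sqsubseteq\mathcal{A}$. $\mathrm{low}_{\mathcal{A}}(\Sigma)=\{\sigma\in\Sigma\mid\mathrm{LockPolicy}(\sigma)\sqsubseteq\mathcal{A}\}$; $\Sigma\approx_{\mathcal{A}}\Sigma'$ iff $\mathrm{low}_{\mathcal{A}}(\Sigma)=\mathrm{low}_{\mathcal{A}}(\Sigma')$. **Worlds.** $W=(\theta_1,\theta_2,\beta)$ with $\beta$ a partial bijection (injective partial function, viewed as a relation) from $\mathrm{dom}\,\theta_1$ to $\mathrm{dom}\,\theta_2$. $W'\sqsupseteq W$ iff $\theta_i\subseteq\theta_i'$ and $\beta\subseteq\beta'$. $(S_1,S_2,m)\triangleright_{\mathcal{A}}W$ iff $\mathrm{dom}\,\theta_i\subseteq\mathrm{dom}\,S_i$, $\theta_i(l)=\mathrm{type}(S_i,l)$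 for $l\in\mathrm{dom}\,\theta_i$, $\beta\subseteq\mathrm{dom}\,\theta_1\times\mathrm{dom}\,\theta_2$, and for all $(l_1,l_2)\in\beta$: $\theta_1(l_1)=\theta_2(l_2)$ and $(S_1(l_1),S_2(l_2),W,m)\in\mathcal{V}^{\mathcal{A}}[\![\theta_1(l_1)]\!]$. **Binary value relation** (well-founded recursion on $m$ and types). $\mathcal{V}^{\mathcal{A}}[\![A^p]\!]$: if $p\sqsubseteq\mathcal{A}$, the tuples $(v,v',W,m)\in\mathcal{V}^{\mathcal{A}}[\![A]\!]$; otherwise the tuples with $(v,W.\theta_1,m),(v',W.\theta_2,m)\in\mathcal{V}[\![A]\!]$ (unary). $\mathsf{unit}$: $((),(),W,m)$; $\mathsf{nat}$: $(n,n,W,m)$; pairs componentwise; sums: both $\mathsf{inl}$ with related payloads or both $\mathsf{inr}$; $\mathsf{ref}\,\tau$: $(l,l',W,m)$ with $W.\theta_1(l)=\tau=W.\theta_2(l')$, $(l,l')\in W.\beta$; $(\lambda x.e_1,\lambda x.e_2,W,m)\in\mathcal{V}^{\mathcal{A}}[\![\tau_1\xrightarrow{\Sigma,pc}\tau_2]\!]$ iff for all $W'\sqsupseteq W$, $m'<m$, $(v_1,v_2,W',m')\in\mathcal{V}^{\mathcal{A}}[\![\tau_1]\!]$, $\Sigma_1,\Sigma_2\supseteq\Sigma$: $([v_1/x]e_1,[v_2/x]e_2,W',\Sigma_1,\Sigma_2,m')\in\mathcal{E}^{\mathcal{A}}[\![\tau_2]\!]$, and $(\lambda x.e_i,W.\theta_i,m)\in\mathcal{V}[\![\tau_1\xrightarrow{\Sigma,pc}\tau_2]\!]$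 for $i=1,2$. **Observation relations.** Indistinguishability $\omega\equiv_{(W,m)}\omega'$ holds iff $\mathrm{pol}(\omega)\not\sqsubseteq\mathcal{A}$ and $\mathrm{pol}(\omega')\not\sqsubseteq\mathcal{A}$; or $\omega=\omega'$ is not a write; or $\omega=\mathsf{wr}_{l,\tau}(v)$, $\omega'=\mathsf{wr}_{l',\tau}(v')$ with $(v,v',W,m)\in\mathcal{V}^{\mathcal{A}}[\![\tau]\!]$ and $(l,l')\in W.\beta$. Irrelevance $\omega\approx^{(W,m)}\omega'$ holds iff $\omega=\omega'$ is not a write; or $\mathrm{pol}(\omega)\not\sqsubseteq\mathcal{A}$ or $\mathrm{pol}(\omega')\not\sqsubseteq\mathcal{A}$; or $\omega=\mathsf{wr}_{l,\tau}(v)$, $\omega'=\mathsf{wr}_{l',\tau}(v')$ with $(v,v',W,m)\in\mathcal{V}^{\mathcal{A}}[\![\tau]\!]$. **Binary expression relation.** $\mathcal{E}^{\mathcal{A}}[\![\tau]\!]=\{(v,v',W,\Sigma_1,\Sigma_2,m)\mid(v,v',W,m)\in\mathcal{V}^{\mathcal{A}}[\![\tau]\!]\}\cup\mathcal{E}^{\mathcal{A},\beta}[\![\tau]\!]$, where $(e_1,e_2,W,\Sigma,\Sigma',m)\in\mathcal{E}^{\mathcal{A},\beta}[\![\tau]\!]$ iff $\Sigma\approx_{\mathcal{A}}\Sigma'$ and for all $\Sigma_1\supseteq\Sigma$, $\Sigma_2\supseteq\Sigma'$ with $\Sigma_1\approx_{\mathcal{A}}\Sigma_2$, all $W'\sqsupseteq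 W$, $m'<m$, $S_1,S_2$ with $(S_1,S_2,m')\triangleright_{\mathcal{A}}W'$, at least one holds: (Par) $e_1,e_2\notin\mathcal{V}$ and for all steps $e_1,\Sigma_1,S_1\to e_1',S_1',\omega,\Sigma_1'$ and $e_2,\Sigma_2,S_2\to e_2',S_2',\omega',\Sigma_2'$: if $\omega\approx^{(W',m')}\omega'$ or $\Sigma_1'\sqsubseteq\mathcal{A}$ or $\Sigma_2'\sqsubseteq\mathcal{A}$, then there is $W''\sqsupseteq W'$ with $(S_1',S_2',m')\triangleright_{\mathcal{A}}W''$, $\omega\equiv_{(W'',m')}\omega'$ and $(e_1',e_2',W'',\Sigma,\Sigma',m')\in\mathcal{E}^{\mathcal{A}}[\![\tau]\!]$; (L) $e_1\notin\mathcal{V}$ and for every step $e_1,\Sigma_1,S_1\to e_1',S_1',\omega,\Sigma_1'$: $\mathrm{pol}(\omega)\not\sqsubseteq\mathcal{A}$ and there is $W''\sqsupseteq W'$ with $(S_1',S_2,m')\triangleright_{\mathcal{A}}W''$ and $(e_1',e_2,W'',\Sigma,\Sigma',m')\in\mathcal{E}^{\mathcal{A}}[\![\tau]\!]$; (R) symmetric to (L) with a step of $e_2$ from $\Sigma_2,S_2$, requiring $(S_1,S_2',m')\triangleright_{\mathcal{A}}W''$ and $(e_1,e_2',W'',\Sigma,\Sigma',m')\in\mathcal{E}^{\mathcal{A}}[\![\tau]\!]$. *)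

From Stdlib Require Import List Arith PeanoNat.
Import ListNotations.
Set Implicit Arguments.

Section Lang.
Variables (Actor Lock : Type).

Definition lockset := Lock -> Prop.
(* A policy is a set of clauses (Sigma => a); p S a means (S => a) \in p. *)
Definition policy := lockset -> Actor -> Prop.

Definition lsubset (S1 S2 : lockset) : Prop := forall l, S1 l -> S2 l.
Definition ladd (S : lockset) (s : Lock) : lockset := fun l => S l \/ l = s.
Definition lremove (S : lockset) (s : Lock) : lockset := fun l => S l /\ l <> s.

Definition policy_le (p q : policy) : Prop :=
  forall S2 a, q S2 a -> exists S1, p S1 a /\ lsubset S1 S2.

Definition bot_policy : policy := fun S _ => forall l, ~ S l.

Definition pol_restrict (p : policy) (Sg : lockset) : policy :=
  fun S a => exists S1, p S1 a /\ (forall l, S l <-> (S1 l /\ ~ Sg l)).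

Inductive raw : Type :=
| TUnit
| TNat
| TSum (t1 t2 : lty)
| TProd (t1 t2 : lty)
| TRef (t : lty)
| TFun (t1 : lty) (Sg : lockset) (pc : policy) (t2 : lty)
with lty : Type :=
| Lab (A : raw) (p : policy).

Definition lty_restrict (t : lty) (Sg : lockset) : lty :=
  match t with Lab A p => Lab A (pol_restrict p Sg) end.

Inductive subty : lty -> lty -> Prop :=
| sub_lab A B p p' : policy_le p p' -> rsubty A B -> subty (Lab A p) (Lab B p')
with rsubty : raw -> raw -> Prop :=
| rsub_unit : rsubty TUnit TUnit
| rsub_nat : rsubty TNat TNat
| rsub_ref t : rsubty (TRef t) (TRef t)
| rsub_prod t0 t1 t2 t3 :
    subty t0 t1 -> subty t2 t3 -> rsubty (TProd t0 t2) (TProd t1 t3)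
| rsub_sum t0 t1 t2 t3 :
    subty t0 t1 -> subty t2 t3 -> rsubty (TSum t0 t2) (TSum t1 t3)
| rsub_fun t0 t1 t2 t3 Sg Sg' p p' :
    subty t0 t1 -> subty t2 t3 -> policy_le p' p -> lsubset Sg Sg' ->
    rsubty (TFun t1 Sg p t2) (TFun t0 Sg' p' t3).

Definition var := nat.
Definition loc := nat.

Inductive expr : Type :=
| EVar (x : var)
| EUnit
| ENat (n : nat)
| ELam (x : var) (e : expr)
| EPair (e1 e2 : expr)
| EFst (e : expr)
| ESnd (e : expr)
| EInl (e : expr)
| EInr (e : expr)
| ECase (e : expr) (x : var) (e1 : expr) (y : var) (e2 : expr)
| EApp (e1 e2 : expr)
| ENew (e : expr) (t : lty)
| EDeref (e : expr)
| EAssign (e1 e2 : expr)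
| EOpen (s : Lock) (e : expr)
| EOpened (s : Lock) (e : expr)
| EClose (s : Lock) (e : expr)
| EClosed (s : Lock) (e : expr)
| EWhen (s : Lock) (e1 e2 : expr)
| ELoc (l : loc).

Fixpoint is_val (e : expr) : Prop :=
  match e with
  | ELam _ _ | EUnit | ENat _ | ELoc _ => True
  | EPair a b => is_val a /\ is_val b
  | EInl a | EInr a => is_val a
  | _ => False
  end.

Fixpoint subst (v : expr) (x : var) (e : expr) : expr :=
  match e with
  | EVar y => if Nat.eqb x y then v else EVar y
  | EUnit => EUnit
  | ENat n => ENat n
  | ELam y b => if Nat.eqb x y then ELam y b else ELam y (subst v x b)
  | EPair a b => EPair (subst v x a) (subst v x b)
  | EFst a => EFst (subst v x a)
  | ESnd a => ESnd (subst v x a)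
  | EInl a => EInl (subst v x a)
  | EInr a => EInr (subst v x a)
  | ECase a y1 b1 y2 b2 =>
      ECase (subst v x a)
            y1 (if Nat.eqb x y1 then b1 else subst v x b1)
            y2 (if Nat.eqb x y2 then b2 else subst v x b2)
  | EApp a b => EApp (subst v x a) (subst v x b)
  | ENew a t => ENew (subst v x a) t
  | EDeref a => EDeref (subst v x a)
  | EAssign a b => EAssign (subst v x a) (subst v x b)
  | EOpen s a => EOpen s (subst v x a)
  | EOpened s a => EOpened s (subst v x a)
  | EClose s a => EClose s (subst v x a)
  | EClosed s a => EClosed s (subst v x a)
  | EWhen s a b => EWhen s (subst v x a) (subst v x b)
  | ELoc l => ELoc l
  end.

(** * Finite maps (association lists, first binding wins) *)
Fixpoint lookup {A : Type} (m : list (loc * A)) (l : loc) : option A :=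
  match m with
  | [] => None
  | (k, a) :: r => if Nat.eqb k l then Some a else lookup r l
  end.

Definition state := list (loc * (expr * lty)).
Definition env := list (loc * lty).

Definition env_le (th th' : env) : Prop :=
  forall l t, lookup th l = Some t -> lookup th' l = Some t.

Inductive obs : Type :=
| OEps
| OWr (l : loc) (t : lty) (v : expr)
| OOpen (s : Lock)
| OClose (s : Lock)
| OUnopen (s : Lock)
| OUnclose (s : Lock).

Definition is_write (w : obs) : Prop :=
  match w with OWr _ _ _ => True | _ => False end.

(** * Reduction  e, Sigma, S -> e', S', omega, Sigma' *)
Inductive step : expr -> lockset -> state -> expr -> state -> obs -> lockset -> Prop :=
| st_new_ctx e t Sg S e' S' w Sg' :
    step e Sg S e' S' w Sg' -> step (ENew e t) Sg S (ENew e' t) S' w Sg'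
| st_deref_ctx e Sg S e' S' w Sg' :
    step e Sg S e' S' w Sg' -> step (EDeref e) Sg S (EDeref e') S' w Sg'
| st_assign_l e1 e2 Sg S e1' S' w Sg' :
    step e1 Sg S e1' S' w Sg' -> step (EAssign e1 e2) Sg S (EAssign e1' e2) S' w Sg'
| st_assign_r l e Sg S e' S' w Sg' :
    step e Sg S e' S' w Sg' -> step (EAssign (ELoc l) e) Sg S (EAssign (ELoc l) e') S' w Sg'
| st_app_l e1 e2 Sg S e1' S' w Sg' :
    step e1 Sg S e1' S' w Sg' -> step (EApp e1 e2) Sg S (EApp e1' e2) S' w Sg'
| st_app_r x b e Sg S e' S' w Sg' :
    step e Sg S e' S' w Sg' -> step (EApp (ELam x b) e) Sg S (EApp (ELam x b) e') S' w Sg'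
| st_pair_l e1 e2 Sg S e1' S' w Sg' :
    step e1 Sg S e1' S' w Sg' -> step (EPair e1 e2) Sg S (EPair e1' e2) S' w Sg'
| st_pair_r v e Sg S e' S' w Sg' :
    is_val v -> step e Sg S e' S' w Sg' -> step (EPair v e) Sg S (EPair v e') S' w Sg'
| st_fst_ctx e Sg S e' S' w Sg' :
    step e Sg S e' S' w Sg' -> step (EFst e) Sg S (EFst e') S' w Sg'
| st_snd_ctx e Sg S e' S' w Sg' :
    step e Sg S e' S' w Sg' -> step (ESnd e) Sg S (ESnd e') S' w Sg'
| st_inl_ctx e Sg S e' S' w Sg' :
    step e Sg S e' S' w Sg' -> step (EInl e) Sg S (EInl e') S' w Sg'
| st_inr_ctx e Sg S e' S' w Sg' :
    step e Sg S e' S' w Sg' -> step (EInr e) Sg S (EInr e') S' w Sg'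
| st_case_ctx e x e1 y e2 Sg S e' S' w Sg' :
    step e Sg S e' S' w Sg' ->
    step (ECase e x e1 y e2) Sg S (ECase e' x e1 y e2) S' w Sg'
| st_open s e Sg S :
    step (EOpen s e) Sg S (EOpened s e) S (OOpen s) Sg
| st_opened s e Sg S e' S' w Sg' :
    step e (ladd Sg s) S e' S' w Sg' -> step (EOpened s e) Sg S (EOpened s e') S' w Sg'
| st_opened_val s v Sg S :
    is_val v -> step (EOpened s v) Sg S v S (OUnopen s) Sg
| st_close s e Sg S :
    step (EClose s e) Sg S (EClosed s e) S (OClose s) Sg
| st_closed s e Sg S e' S' w Sg' :
    step e (lremove Sg s) S e' S' w Sg' -> step (EClosed s e) Sg S (EClosed s e') S' w Sg'
| st_closed_val s v Sg S :
    is_val v -> step (EClosed s v) Sg S v S (OUnclose s) Sg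
| st_when_t s e1 e2 Sg S e'' S' w Sg' :
    Sg s -> step e1 Sg S e'' S' w Sg' -> step (EWhen s e1 e2) Sg S (EWhen s e'' e2) S' w Sg'
| st_when_f s e1 e2 Sg S e'' S' w Sg' :
    ~ Sg s -> step e2 Sg S e'' S' w Sg' -> step (EWhen s e1 e2) Sg S (EWhen s e1 e'') S' w Sg'
| st_when_tv s v e2 Sg S :
    Sg s -> is_val v -> step (EWhen s v e2) Sg S v S OEps Sg
| st_when_fv s e1 v Sg S :
    ~ Sg s -> is_val v -> step (EWhen s e1 v) Sg S v S OEps Sg
| st_deref l Sg S v t :
    lookup S l = Some (v, t) -> step (EDeref (ELoc l)) Sg S v S OEps Sg
| st_new v t Sg S l :
    is_val v -> lookup S l = None ->
    step (ENew v t) Sg S (ELoc l) ((l, (v, t)) :: S) (OWr l t v) Sg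
| st_assign l v Sg S v0 t :
    is_val v -> lookup S l = Some (v0, t) ->
    step (EAssign (ELoc l) v) Sg S EUnit ((l, (v, t)) :: S) (OWr l t v) Sg
| st_beta x e v Sg S :
    is_val v -> step (EApp (ELam x e) v) Sg S (subst v x e) S OEps Sg
| st_fst v v' Sg S :
    is_val v -> is_val v' -> step (EFst (EPair v v')) Sg S v S OEps Sg
| st_snd v v' Sg S :
    is_val v -> is_val v' -> step (ESnd (EPair v v')) Sg S v' S OEps Sg
| st_case_inl v x e1 y e2 Sg S :
    is_val v -> step (ECase (EInl v) x e1 y e2) Sg S (subst v x e1) S OEps Sg
| st_case_inr v x e1 y e2 Sg S :
    is_val v -> step (ECase (EInr v) x e1 y e2) Sg S (subst v y e2) S OEps Sg.

Variable LockPolicy : Lock -> policy.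

Definition pol (w : obs) : option policy :=
  match w with
  | OEps => None
  | OWr _ (Lab _ p) _ => Some p
  | OOpen s | OClose s | OUnopen s | OUnclose s => Some (LockPolicy s)
  end.

Definition pc_le_obs (pc : policy) (w : obs) : Prop :=
  match pol w with Some p => policy_le pc p | None => False end.

Record ubundle := {
  uVR : raw -> expr -> env -> Prop;
  uV  : lty -> expr -> env -> Prop;
  uE  : policy -> lty -> expr -> env -> Prop;
  uSat : state -> env -> Prop
}.

Definition ubundle_dummy : ubundle :=
  {| uVR := fun _ _ _ => False; uV := fun _ _ _ => False;
     uE := fun _ _ _ _ => False; uSat := fun _ _ => False |}.

Fixpoint uVr (m : nat) (prev : nat -> ubundle) (A : raw) (v : expr) (th : env)
  {struct A} : Prop :=
  match A with
  | TUnit => v = EUnit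
  | TNat => exists n, v = ENat n
  | TProd t1 t2 =>
      match v with EPair v1 v2 => uVl m prev t1 v1 th /\ uVl m prev t2 v2 th | _ => False end
  | TSum t1 t2 =>
      match v with
      | EInl v1 => uVl m prev t1 v1 th
      | EInr v2 => uVl m prev t2 v2 th
      | _ => False
      end
  | TRef t => match v with ELoc l => lookup th l = Some t | _ => False end
  | TFun t1 _ pc t2 =>
      match v with
      | ELam x e =>
          forall th' m' v', env_le th th' -> m' < m ->
            uV (prev m') t1 v' th' -> uE (prev m') pc t2 (subst v' x e) th'
      | _ => False
      end
  end
with uVl (m : nat) (prev : nat -> ubundle) (t : lty) (v : expr) (th : env)
  {struct t} : Prop :=
  match t with Lab A _ => uVr m prev A v th end.

Definition usat (V : lty -> expr -> env -> Prop) (S : state) (th : env) : Prop :=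
  (forall l, lookup th l <> None -> lookup S l <> None) /\
  (forall l t, lookup th l = Some t -> exists v, lookup S l = Some (v, t) /\ V t v th).

Definition ubody (m : nat) (prev : nat -> ubundle) : ubundle :=
  {| uVR := uVr m prev;
     uV := uVl m prev;
     uSat := usat (uVl m prev);
     uE := fun pc t e th =>
       uVl m prev t e th \/
       (~ is_val e /\
        forall S th' m' e' S' w Sg Sg',
          env_le th th' -> m' < m -> uSat (prev m') S th' ->
          step e Sg S e' S' w Sg' ->
          (w = OEps \/ pc_le_obs pc w) /\
          exists th'', env_le th' th'' /\ uSat (prev m') S' th'' /\
                       uE (prev m') pc t e' th'') |}.

(* uupto n m = the bundle at level m, for m <= n (strong recursion on m). *)
Fixpoint uupto (n : nat) : nat -> ubundle :=
  match n with
  | 0 => fun _ => ubody 0 (fun _ => ubundle_dummy)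
  | S k => fun m => if m <=? k then uupto k m else ubody (S k) (uupto k)
  end.

Definition ubund (m : nat) : ubundle := uupto m m.

Definition VRu (A : raw) (v : expr) (th : env) (m : nat) : Prop := uVR (ubund m) A v th.
Definition Vu (t : lty) (v : expr) (th : env) (m : nat) : Prop := uV (ubund m) t v th.
Definition Eu (pc : policy) (t : lty) (e : expr) (th : env) (m : nat) : Prop :=
  uE (ubund m) pc t e th.
Definition Satu (S : state) (m : nat) (th : env) : Prop := uSat (ubund m) S th.

Record attacker := mkAttacker { att_actor : Actor; att_locks : lockset }.

Variable Att : attacker.

Definition att_le (p : policy) : Prop :=
  policy_le p (fun S b => (forall l, S l <-> att_locks Att l) /\ b = att_actor Att).

Definition locks_le_att (S : lockset) : Prop := lsubset S (att_locks Att).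

Definition lock_equiv (S1 S2 : lockset) : Prop :=
  forall s, (S1 s /\ att_le (LockPolicy s)) <-> (S2 s /\ att_le (LockPolicy s)).

Definition obs_low (w : obs) : Prop :=
  match pol w with Some p => att_le p | None => False end.

Record world := mkWorld {
  th1 : env;
  th2 : env;
  beta : list (loc * loc);
  beta_dom : forall l1 l2, In (l1, l2) beta ->
               lookup th1 l1 <> None /\ lookup th2 l2 <> None;
  beta_fun : forall l1 l2 l2', In (l1, l2) beta -> In (l1, l2') beta -> l2 = l2';
  beta_inj : forall l1 l1' l2, In (l1, l2) beta -> In (l1', l2) beta -> l1 = l1'
}.

Definition world_le (W W' : world) : Prop :=
  env_le (th1 W) (th1 W') /\ env_le (th2 W) (th2 W') /\
  (forall p, In p (beta W) -> In p (beta W')).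

Record bbundle := {
  bV : lty -> expr -> expr -> world -> Prop;
  bE : lty -> expr -> expr -> world -> lockset -> lockset -> Prop;
  bSat : state -> state -> world -> Prop
}.

Definition bbundle_dummy : bbundle :=
  {| bV := fun _ _ _ _ => False; bE := fun _ _ _ _ _ _ => False;
     bSat := fun _ _ _ => False |}.

Fixpoint bVr (m : nat) (prev : nat -> bbundle) (A : raw) (v1 v2 : expr) (W : world)
  {struct A} : Prop :=
  match A with
  | TUnit => v1 = EUnit /\ v2 = EUnit
  | TNat => exists n, v1 = ENat n /\ v2 = ENat n
  | TProd t1 t2 =>
      match v1, v2 with
      | EPair a b, EPair c d => bVl m prev t1 a c W /\ bVl m prev t2 b d W
      | _, _ => False
      end
  | TSum t1 t2 =>
      match v1, v2 with
      | EInl a, EInl c => bVl m prev t1 a c W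
      | EInr b, EInr d => bVl m prev t2 b d W
      | _, _ => False
      end
  | TRef t =>
      match v1, v2 with
      | ELoc l, ELoc l' =>
          lookup (th1 W) l = Some t /\ lookup (th2 W) l' = Some t /\ In (l, l') (beta W)
      | _, _ => False
      end
  | TFun t1 Sg pc t2 =>
      match v1, v2 with
      | ELam x e1, ELam y e2 =>
          x = y /\
          (forall W' m' u1 u2 S1 S2,
              world_le W W' -> m' < m -> bV (prev m') t1 u1 u2 W' ->
              lsubset Sg S1 -> lsubset Sg S2 ->
              bE (prev m') t2 (subst u1 x e1) (subst u2 x e2) W' S1 S2) /\
          VRu A v1 (th1 W) m /\ VRu A v2 (th2 W) m
      | _, _ => False
      end
  end
with bVl (m : nat) (prev : nat -> bbundle) (t : lty) (v1 v2 : expr) (W : world)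
  {struct t} : Prop :=
  match t with
  | Lab A p =>
      (att_le p /\ bVr m prev A v1 v2 W) \/
      (~ att_le p /\ VRu A v1 (th1 W) m /\ VRu A v2 (th2 W) m)
  end.

Definition bsat (V : lty -> expr -> expr -> world -> Prop)
    (S1 S2 : state) (W : world) : Prop :=
  (forall l, lookup (th1 W) l <> None -> lookup S1 l <> None) /\
  (forall l, lookup (th2 W) l <> None -> lookup S2 l <> None) /\
  (forall l t, lookup (th1 W) l = Some t -> exists v, lookup S1 l = Some (v, t)) /\
  (forall l t, lookup (th2 W) l = Some t -> exists v, lookup S2 l = Some (v, t)) /\
  (forall l1 l2, In (l1, l2) (beta W) ->
     lookup (th1 W) l1 <> None /\ lookup (th2 W) l2 <> None) /\
  (forall l1 l2, In (l1, l2) (beta W) ->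
     exists t v1 v2 t1 t2,
       lookup (th1 W) l1 = Some t /\ lookup (th2 W) l2 = Some t /\
       lookup S1 l1 = Some (v1, t1) /\ lookup S2 l2 = Some (v2, t2) /\
       V t v1 v2 W).

Definition obs_indist (V : lty -> expr -> expr -> world -> Prop)
    (W : world) (w w' : obs) : Prop :=
  (~ obs_low w /\ ~ obs_low w') \/
  (w = w' /\ ~ is_write w) \/
  (exists l l' t v v', w = OWr l t v /\ w' = OWr l' t v' /\ V t v v' W /\ In (l, l') (beta W)).

Definition obs_irrel (V : lty -> expr -> expr -> world -> Prop)
    (W : world) (w w' : obs) : Prop :=
  (w = w' /\ ~ is_write w) \/
  ~ obs_low w \/ ~ obs_low w' \/
  (exists l l' t v v', w = OWr l t v /\ w' = OWr l' t v' /\ V t v v' W).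

Definition bbody (m : nat) (prev : nat -> bbundle) : bbundle :=
  {| bV := bVl m prev;
     bSat := bsat (bVl m prev);
     bE := fun t e1 e2 W Sg Sg' =>
       bVl m prev t e1 e2 W \/
       (lock_equiv Sg Sg' /\
        forall Sg1 Sg2 W' m' S1 S2,
          lsubset Sg Sg1 -> lsubset Sg' Sg2 -> lock_equiv Sg1 Sg2 ->
          world_le W W' -> m' < m -> bSat (prev m') S1 S2 W' ->
          (~ is_val e1 /\ ~ is_val e2 /\
           forall e1' S1' w Sg1' e2' S2' w' Sg2',
             step e1 Sg1 S1 e1' S1' w Sg1' ->
             step e2 Sg2 S2 e2' S2' w' Sg2' ->
             (obs_irrel (bV (prev m')) W' w w' \/ locks_le_att Sg1' \/ locks_le_att Sg2') ->
             exists W'', world_le W' W'' /\ bSat (prev m') S1' S2' W'' /\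
               obs_indist (bV (prev m')) W'' w w' /\
               bE (prev m') t e1' e2' W'' Sg Sg')
          \/
          (~ is_val e1 /\
           forall e1' S1' w Sg1',
             step e1 Sg1 S1 e1' S1' w Sg1' ->
             ~ obs_low w /\
             exists W'', world_le W' W'' /\ bSat (prev m') S1' S2 W'' /\
               bE (prev m') t e1' e2 W'' Sg Sg')
          \/
          (~ is_val e2 /\
           forall e2' S2' w Sg2',
             step e2 Sg2 S2 e2' S2' w Sg2' ->
             ~ obs_low w /\
             exists W'', world_le W' W'' /\ bSat (prev m') S1 S2' W'' /\
               bE (prev m') t e1 e2' W'' Sg Sg')) |}.

Fixpoint bupto (n : nat) : nat -> bbundle :=
  match n with
  | 0 => fun _ => bbody 0 (fun _ => bbundle_dummy)
  | S k => fun m => if m <=? k then bupto k m else bbody (S k) (bupto k)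
  end.

Definition bbund (m : nat) : bbundle := bupto m m.

Definition VB (t : lty) (v1 v2 : expr) (W : world) (m : nat) : Prop :=
  bV (bbund m) t v1 v2 W.
Definition EB (t : lty) (e1 e2 : expr) (W : world) (Sg Sg' : lockset) (m : nat) : Prop :=
  bE (bbund m) t e1 e2 W Sg Sg'.
Definition SatB (S1 S2 : state) (m : nat) (W : world) : Prop :=
  bSat (bbund m) S1 S2 W.

End Lang.

From Stdlib Require Import List Arith Lia Classical.

Set Implicit Arguments.
Unset Strict Implicit.

(* Allocation is the only step of [new(e, tau)] that is not a step of [e], so
   [new] preserves the expression relation by induction on the step index
   once the allocation of two related values is handled. There the fresh
   locations join the world as a related pair of type [tau = B^q], so the two
   written values must be related at [tau]. If [q] is not below the attacker
   this only asks for the unary relation, which subtyping transports from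
   [tau' = A^p]. Otherwise the premise of (Par) supplies it: irrelevance of
   the two writes relates the values at [tau] directly, and if instead an
   active lock set [Sigma_i ⊇ Sigma] is below the attacker, then
   [p|_Sigma ⊑ q ⊑ A] forces [p ⊑ A] (every lock removed by the restriction is
   held by the attacker), so subtyping again carries the relation from [tau']
   to [tau]. *)

Scheme raw_lty_ind := Induction for raw Sort Prop
  with lty_raw_ind := Induction for lty Sort Prop.
Combined Scheme raw_lty_mutind from raw_lty_ind, lty_raw_ind.
Scheme subty_rsubty_ind := Induction for subty Sort Prop
  with rsubty_subty_ind := Induction for rsubty Sort Prop.
Combined Scheme subtyping_mutind from subty_rsubty_ind, rsubty_subty_ind.

Lemma lookup_cons_other {A : Type} (r : list (loc * A)) k y a :
  lookup r k = None -> lookup r a <> None -> lookup ((k, y) :: r) a = lookup r a.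
Proof. intros Hk Ha. simpl. destruct (Nat.eqb_spec k a); [subst; contradiction | reflexivity]. Qed.

Section LogicalRelations.
Variables (Actor Lock : Type) (LP : Lock -> policy Actor Lock) (Att : attacker Actor Lock).

Lemma env_le_trans (th th' th'' : env Actor Lock) :
  env_le th th' -> env_le th' th'' -> env_le th th''.
Proof. unfold env_le; auto. Qed.

Lemma world_le_trans (W W' W'' : world Actor Lock) :
  world_le W W' -> world_le W' W'' -> world_le W W''.
Proof.
  intros (H1 & H2 & H3) (H1' & H2' & H3').
  repeat split; eauto using env_le_trans.
Qed.

Lemma policy_le_trans (p q r : policy Actor Lock) :
  policy_le p q -> policy_le q r -> policy_le p r.
Proof.
  intros Hpq Hqr S a Hr.
  destruct (Hqr S a Hr) as (S1 & Hq & HS1). destruct (Hpq S1 a Hq) as (S0 & Hp & HS0).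
  exists S0. split; [exact Hp | intros l Hl; apply HS1, HS0, Hl].
Qed.

(* The family of bundles a level [m] is built from; only its values below [m]
   are meaningful. *)
Definition prevu (m : nat) : nat -> ubundle Actor Lock :=
  match m with 0 => fun _ => @ubundle_dummy Actor Lock | S k => uupto LP k end.
Definition prevb (m : nat) : nat -> bbundle Actor Lock :=
  match m with 0 => fun _ => @bbundle_dummy Actor Lock | S k => bupto LP Att k end.

Lemma ubund_unfold m : ubund LP m = ubody LP m (prevu m).
Proof.
  destruct m as [|m]; [reflexivity|]. unfold ubund. cbn [uupto].
  now rewrite (proj2 (Nat.leb_gt (S m) m) (Nat.lt_succ_diag_r m)).
Qed.

Lemma bbund_unfold m : bbund LP Att m = bbody LP Att m (prevb m).
Proof.
  destruct m as [|m]; [reflexivity|]. unfold bbund. cbn [bupto].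
  now rewrite (proj2 (Nat.leb_gt (S m) m) (Nat.lt_succ_diag_r m)).
Qed.

Lemma uupto_ubund n m : m <= n -> uupto LP n m = ubund LP m.
Proof.
  induction n as [|n IH]; intros Hmn.
  - now replace m with 0 by lia.
  - cbn [uupto]. destruct (Nat.leb_spec m n); [apply IH; lia|].
    replace m with (S n) by lia. unfold ubund. cbn [uupto].
    now rewrite (proj2 (Nat.leb_gt (S n) n) (Nat.lt_succ_diag_r n)).
Qed.

Lemma bupto_bbund n m : m <= n -> bupto LP Att n m = bbund LP Att m.
Proof.
  induction n as [|n IH]; intros Hmn.
  - now replace m with 0 by lia.
  - cbn [bupto]. destruct (Nat.leb_spec m n); [apply IH; lia|].
    replace m with (S n) by lia. unfold bbund. cbn [bupto].
    now rewrite (proj2 (Nat.leb_gt (S n) n) (Nat.lt_succ_diag_r n)).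
Qed.

Lemma prevu_lt m m' : m' < m -> prevu m m' = ubund LP m'.
Proof. destruct m; intros; [lia|]. apply uupto_ubund. lia. Qed.

Lemma prevb_lt m m' : m' < m -> prevb m m' = bbund LP Att m'.
Proof. destruct m; intros; [lia|]. apply bupto_bbund. lia. Qed.

Lemma VRu_unfold A v th m : VRu LP A v th m = uVr m (prevu m) A v th.
Proof. unfold VRu. now rewrite ubund_unfold. Qed.

Lemma Vu_unfold t v th m : Vu LP t v th m = uVl m (prevu m) t v th.
Proof. unfold Vu. now rewrite ubund_unfold. Qed.

Lemma Eu_unfold pc t e th m : Eu LP pc t e th m = uE (ubody LP m (prevu m)) pc t e th.
Proof. unfold Eu. now rewrite ubund_unfold. Qed.

Lemma VB_unfold t v1 v2 W m : VB LP Att t v1 v2 W m = bVl LP Att m (prevb m) t v1 v2 W.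
Proof. unfold VB. now rewrite bbund_unfold. Qed.

Definition VB_at (m : nat) :
  lty Actor Lock -> expr Actor Lock -> expr Actor Lock -> world Actor Lock -> Prop :=
  fun t v1 v2 W => VB LP Att t v1 v2 W m.

Lemma SatB_unfold S1 S2 m W : SatB LP Att S1 S2 m W = bsat (VB_at m) S1 S2 W.
Proof. unfold SatB, VB_at, VB. now rewrite bbund_unfold. Qed.

Lemma uV_is_val :
  (forall A m prev (v : expr Actor Lock) th, uVr m prev A v th -> is_val v) /\
  (forall t m prev (v : expr Actor Lock) th, uVl m prev t v th -> is_val v).
Proof.
  apply raw_lty_mutind; intros; simpl in *; eauto.
  - now subst.
  - now destruct H as [n ->].
  - destruct v; simpl in *; try contradiction; eauto.
  - destruct v; simpl in *; try contradiction. destruct H1; eauto.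
  - destruct v; simpl in *; try contradiction; auto.
  - destruct v; simpl in *; try contradiction; auto.
Qed.

Lemma uV_env_mono :
  (forall A m prev (v : expr Actor Lock) th th',
      env_le th th' -> uVr m prev A v th -> uVr m prev A v th') /\
  (forall t m prev (v : expr Actor Lock) th th',
      env_le th th' -> uVl m prev t v th -> uVl m prev t v th').
Proof.
  apply raw_lty_mutind; intros; simpl in *; eauto.
  - destruct v; simpl in *; try contradiction; eauto.
  - destruct v; simpl in *; try contradiction. destruct H2; eauto.
  - destruct v; simpl in *; try contradiction; auto.
  - destruct v; simpl in *; try contradiction.
    intros th'' m' v' Hle. apply H2. eauto using env_le_trans.
Qed.

Lemma uV_down :
  (forall A m m' (v : expr Actor Lock) th,
      m' <= m -> uVr m (prevu m) A v th -> uVr m' (prevu m') A v th) /\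
  (forall t m m' (v : expr Actor Lock) th,
      m' <= m -> uVl m (prevu m) t v th -> uVl m' (prevu m') t v th).
Proof.
  apply raw_lty_mutind; intros; simpl in *; eauto.
  - destruct v; simpl in *; try contradiction; eauto.
  - destruct v; simpl in *; try contradiction. destruct H2; eauto.
  - destruct v; simpl in *; try contradiction.
    intros th' m'' v' Hle Hlt.
    rewrite (@prevu_lt m' m'') by lia. rewrite <- (@prevu_lt m m'') by lia.
    apply H2; [exact Hle | lia].
Qed.

Lemma Eu_weaken pc pc' t t' :
  policy_le pc' pc ->
  (forall m v th, Vu LP t v th m -> Vu LP t' v th m) ->
  forall m e th, Eu LP pc t e th m -> Eu LP pc' t' e th m.
Proof.
  intros Hpc Hv m. induction m as [m IH] using lt_wf_ind. intros e th.
  rewrite !Eu_unfold. cbn [uE ubody].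
  intros [Hval | [Hnv Hs]]; [left; rewrite <- Vu_unfold in *; auto | right; split; [exact Hnv|]].
  intros S th' m' e' S' w Sg Sg' Hle Hlt HS Hst.
  specialize (Hs S th' m' e' S' w Sg Sg' Hle Hlt).
  rewrite (@prevu_lt m m') in Hs, HS |- * by lia.
  destruct (Hs HS Hst) as [Hw (th'' & H1 & H2 & H3)]. split.
  - destruct Hw as [Hw | Hw]; [left; exact Hw | right].
    unfold pc_le_obs in *. destruct (pol LP w); [eapply policy_le_trans; eauto | contradiction].
  - exists th''. repeat split; auto. exact (IH m' Hlt e' th'' H3).
Qed.

Lemma uV_subty :
  (forall t t', subty t t' -> forall m (v : expr Actor Lock) th,
      uVl m (prevu m) t v th -> uVl m (prevu m) t' v th) /\
  (forall A B, rsubty A B -> forall m (v : expr Actor Lock) th,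
      uVr m (prevu m) A v th -> uVr m (prevu m) B v th).
Proof.
  apply subtyping_mutind; intros; simpl in *; auto.
  - destruct v; simpl in *; try contradiction. destruct H1; eauto.
  - destruct v; simpl in *; try contradiction; eauto.
  - destruct v; simpl in *; try contradiction.
    intros th' m' v' Hle Hlt Hv'. specialize (H1 th' m' v' Hle Hlt).
    rewrite (@prevu_lt m m') in H1, Hv' |- * by lia.
    change (Vu LP t0 v' th' m') in Hv'.
    change (Vu LP t1 v' th' m' -> Eu LP p t2 (subst v' x v) th' m') in H1.
    apply (@Eu_weaken p p' t2 t3 p0); [intros k u th''; rewrite !Vu_unfold; auto|].
    apply H1. rewrite Vu_unfold in *. auto.
Qed.

Lemma bV_is_val :
  (forall A m prev (v1 v2 : expr Actor Lock) W,
      bVr LP Att m prev A v1 v2 W -> is_val v1 /\ is_val v2) /\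
  (forall t m prev (v1 v2 : expr Actor Lock) W,
      bVl LP Att m prev t v1 v2 W -> is_val v1 /\ is_val v2).
Proof.
  apply raw_lty_mutind; intros; simpl in *.
  - now destruct H as [-> ->].
  - now destruct H as (n & -> & ->).
  - destruct v1, v2; simpl in *; try contradiction; eauto.
  - destruct v1, v2; simpl in *; try contradiction.
    destruct H1 as [Ha Hb]. destruct (H _ _ _ _ _ Ha), (H0 _ _ _ _ _ Hb). tauto.
  - destruct v1, v2; simpl in *; try contradiction; auto.
  - destruct v1, v2; simpl in *; try contradiction; auto.
  - destruct H0 as [[_ H0] | (_ & H1 & H2)]; [eauto|].
    rewrite VRu_unfold in H1, H2. split; eapply (proj1 uV_is_val); eauto.
Qed.

Lemma bV_unary :
  (forall A m prev (v1 v2 : expr Actor Lock) W, bVr LP Att m prev A v1 v2 W ->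
      uVr m (prevu m) A v1 (th1 W) /\ uVr m (prevu m) A v2 (th2 W)) /\
  (forall t m prev (v1 v2 : expr Actor Lock) W, bVl LP Att m prev t v1 v2 W ->
      uVl m (prevu m) t v1 (th1 W) /\ uVl m (prevu m) t v2 (th2 W)).
Proof.
  apply raw_lty_mutind; intros; simpl in *.
  - exact H.
  - destruct H as (n & -> & ->). eauto.
  - destruct v1, v2; simpl in *; try contradiction; eauto.
  - destruct v1, v2; simpl in *; try contradiction.
    destruct H1 as [Ha Hb]. destruct (H _ _ _ _ _ Ha), (H0 _ _ _ _ _ Hb). tauto.
  - destruct v1, v2; simpl in *; try contradiction; tauto.
  - destruct v1, v2; simpl in *; try contradiction.
    rewrite !VRu_unfold in H1. tauto.
  - destruct H0 as [[_ H0] | (_ & H1 & H2)]; [eauto|].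
    rewrite !VRu_unfold in H1, H2. auto.
Qed.

Lemma bV_world_mono :
  (forall A m prev (v1 v2 : expr Actor Lock) W W', world_le W W' ->
      bVr LP Att m prev A v1 v2 W -> bVr LP Att m prev A v1 v2 W') /\
  (forall t m prev (v1 v2 : expr Actor Lock) W W', world_le W W' ->
      bVl LP Att m prev t v1 v2 W -> bVl LP Att m prev t v1 v2 W').
Proof.
  apply raw_lty_mutind; intros; simpl in *; auto.
  - destruct v1, v2; simpl in *; try contradiction; eauto.
  - destruct v1, v2; simpl in *; try contradiction. destruct H2; eauto.
  - destruct v1, v2; simpl in *; try contradiction.
    destruct H0 as (He1 & He2 & Hb), H1 as (? & ? & ?). auto.
  - destruct v1, v2; simpl in *; try contradiction.
    destruct H2 as (Hx & Hf & Hu1 & Hu2). destruct H1 as (He1 & He2 & Hb).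
    rewrite !VRu_unfold in *. repeat split; auto.
    + intros W'' m' u1 u2 S1 S2 HW. apply Hf. eapply world_le_trans; [|exact HW]. now split.
    + eapply (proj1 uV_env_mono); eauto.
    + eapply (proj1 uV_env_mono); eauto.
  - destruct H1 as [[Ha Hb] | (Hn & H1 & H2)]; [left; eauto | right].
    destruct H0 as (He1 & He2 & _). rewrite !VRu_unfold in *.
    split; [exact Hn|]. split; eapply (proj1 uV_env_mono); eauto.
Qed.

Lemma bV_down :
  (forall A m m' (v1 v2 : expr Actor Lock) W, m' <= m ->
      bVr LP Att m (prevb m) A v1 v2 W -> bVr LP Att m' (prevb m') A v1 v2 W) /\
  (forall t m m' (v1 v2 : expr Actor Lock) W, m' <= m ->
      bVl LP Att m (prevb m) t v1 v2 W -> bVl LP Att m' (prevb m') t v1 v2 W).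
Proof.
  apply raw_lty_mutind; intros; simpl in *; auto.
  - destruct v1, v2; simpl in *; try contradiction; eauto.
  - destruct v1, v2; simpl in *; try contradiction. destruct H2; eauto.
  - destruct v1, v2; simpl in *; try contradiction.
    destruct H2 as (Hx & Hf & Hu1 & Hu2). rewrite !VRu_unfold in *. repeat split; auto.
    + intros W'' m'' u1 u2 S1 S2 HW Hlt.
      specialize (Hf W'' m'' u1 u2 S1 S2 HW ltac:(lia)).
      rewrite (@prevb_lt m m'') in Hf by lia. now rewrite (@prevb_lt m' m'') by lia.
    + eapply (proj1 uV_down); eauto.
    + eapply (proj1 uV_down); eauto.
  - destruct H1 as [[Ha Hb] | (Hn & H1 & H2)]; [left; eauto | right].
    rewrite !VRu_unfold in *. split; [exact Hn|]. split; eapply (proj1 uV_down); eauto.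
Qed.

Lemma VB_is_val t v1 v2 W m : VB LP Att t v1 v2 W m -> is_val v1 /\ is_val v2.
Proof. rewrite VB_unfold. apply (proj2 bV_is_val). Qed.

Lemma VB_world_mono t v1 v2 W W' m :
  world_le W W' -> VB LP Att t v1 v2 W m -> VB LP Att t v1 v2 W' m.
Proof. rewrite !VB_unfold. apply (proj2 bV_world_mono). Qed.

Lemma VB_down t v1 v2 W m m' : m' <= m -> VB LP Att t v1 v2 W m -> VB LP Att t v1 v2 W m'.
Proof. rewrite !VB_unfold. apply (proj2 bV_down). Qed.

Section Clauses.
Variables (t : lty Actor Lock) (e1 e2 : expr Actor Lock) (Sg Sg' Sg1 Sg2 : lockset Lock)
  (W' : world Actor Lock) (m' : nat) (S1 S2 : state Actor Lock).

Definition par_clause : Prop :=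
  ~ is_val e1 /\ ~ is_val e2 /\
  forall e1' S1' w Sg1' e2' S2' w' Sg2',
    step e1 Sg1 S1 e1' S1' w Sg1' -> step e2 Sg2 S2 e2' S2' w' Sg2' ->
    obs_irrel LP Att (VB_at m') W' w w' \/ locks_le_att Att Sg1' \/ locks_le_att Att Sg2' ->
    exists W'', world_le W' W'' /\ SatB LP Att S1' S2' m' W'' /\
      obs_indist LP Att (VB_at m') W'' w w' /\ EB LP Att t e1' e2' W'' Sg Sg' m'.

Definition left_clause : Prop :=
  ~ is_val e1 /\
  forall e1' S1' w Sg1', step e1 Sg1 S1 e1' S1' w Sg1' ->
    ~ obs_low LP Att w /\
    exists W'', world_le W' W'' /\ SatB LP Att S1' S2 m' W'' /\ EB LP Att t e1' e2 W'' Sg Sg' m'.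

Definition right_clause : Prop :=
  ~ is_val e2 /\
  forall e2' S2' w Sg2', step e2 Sg2 S2 e2' S2' w Sg2' ->
    ~ obs_low LP Att w /\
    exists W'', world_le W' W'' /\ SatB LP Att S1 S2' m' W'' /\ EB LP Att t e1 e2' W'' Sg Sg' m'.

End Clauses.

Lemma EB_unfold t e1 e2 W Sg Sg' m :
  EB LP Att t e1 e2 W Sg Sg' m <->
  VB LP Att t e1 e2 W m \/
  (lock_equiv LP Att Sg Sg' /\
   forall Sg1 Sg2 W' m' S1 S2,
     lsubset Sg Sg1 -> lsubset Sg' Sg2 -> lock_equiv LP Att Sg1 Sg2 ->
     world_le W W' -> m' < m -> SatB LP Att S1 S2 m' W' ->
     par_clause t e1 e2 Sg Sg' Sg1 Sg2 W' m' S1 S2 \/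
     left_clause t e1 e2 Sg Sg' Sg1 W' m' S1 S2 \/
     right_clause t e1 e2 Sg Sg' Sg2 W' m' S1 S2).
Proof.
  unfold EB at 1. rewrite bbund_unfold, VB_unfold. cbn [bE bbody].
  split; intros [H | [Hlk H]]; (left; exact H) || (right; split; [exact Hlk|]);
    intros Sg1 Sg2 W' m' S1 S2 h1 h2 h3 h4 hm HS; specialize (H Sg1 Sg2 W' m' S1 S2 h1 h2 h3 h4 hm).
  - rewrite (@prevb_lt m m') in H by lia. exact (H HS).
  - rewrite (@prevb_lt m m') in HS |- * by lia. exact (H HS).
Qed.

Definition steps_reflected (C : expr Actor Lock -> expr Actor Lock) : Prop :=
  forall e, ~ is_val e ->
    ~ is_val (C e) /\
    forall Sg S e' S' w Sg', step (C e) Sg S e' S' w Sg' ->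
      exists e0, e' = C e0 /\ step e Sg S e0 S' w Sg'.

Lemma EB_frame (C : expr Actor Lock -> expr Actor Lock) t t' Sg Sg' :
  steps_reflected C ->
  (forall m v1 v2 W, VB LP Att t v1 v2 W m -> EB LP Att t' (C v1) (C v2) W Sg Sg' m) ->
  forall m e1 e2 W, EB LP Att t e1 e2 W Sg Sg' m -> EB LP Att t' (C e1) (C e2) W Sg Sg' m.
Proof.
  intros HC Hval m. induction m as [m IH] using lt_wf_ind. intros e1 e2 W HE.
  apply EB_unfold in HE as [Hv | [Hlk Hs]]; [exact (Hval _ _ _ _ Hv)|].
  apply EB_unfold. right. split; [exact Hlk|].
  intros Sg1 Sg2 W' m' S1 S2 h1 h2 h3 h4 hm HS.
  destruct (Hs Sg1 Sg2 W' m' S1 S2 h1 h2 h3 h4 hm HS) as [(n1 & n2 & P) | [(n1 & P) | (n2 & P)]].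
  - left. destruct (HC e1 n1) as [Cn1 Hst1], (HC e2 n2) as [Cn2 Hst2].
    split; [exact Cn1|]. split; [exact Cn2|].
    intros e1' S1' w Sg1' e2' S2' w' Sg2' st1 st2 Hlow.
    destruct (Hst1 _ _ _ _ _ _ st1) as (e0 & -> & st1').
    destruct (Hst2 _ _ _ _ _ _ st2) as (e0' & -> & st2').
    destruct (P _ _ _ _ _ _ _ _ st1' st2' Hlow) as (W'' & HW & HS' & Hw & HE).
    exists W''. split; [exact HW|]. split; [exact HS'|]. split; [exact Hw|].
    exact (IH m' hm _ _ _ HE).
  - right; left. destruct (HC e1 n1) as [Cn1 Hst1]. split; [exact Cn1|].
    intros e1' S1' w Sg1' st1. destruct (Hst1 _ _ _ _ _ _ st1) as (e0 & -> & st1').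
    destruct (P _ _ _ _ st1') as (Hw & W'' & HW & HS' & HE).
    split; [exact Hw|]. exists W''. split; [exact HW|]. split; [exact HS'|].
    exact (IH m' hm _ _ _ HE).
  - right; right. destruct (HC e2 n2) as [Cn2 Hst2]. split; [exact Cn2|].
    intros e2' S2' w Sg2' st2. destruct (Hst2 _ _ _ _ _ _ st2) as (e0 & -> & st2').
    destruct (P _ _ _ _ st2') as (Hw & W'' & HW & HS' & HE).
    split; [exact Hw|]. exists W''. split; [exact HW|]. split; [exact HS'|].
    exact (IH m' hm _ _ _ HE).
Qed.

Lemma EB_weaken t t' :
  (forall m v1 v2 W, VB LP Att t v1 v2 W m -> VB LP Att t' v1 v2 W m) ->
  forall m e1 e2 W Sg Sg', EB LP Att t e1 e2 W Sg Sg' m -> EB LP Att t' e1 e2 W Sg Sg' m.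
Proof.
  intros Hv m e1 e2 W Sg Sg'.
  apply (EB_frame (C := fun e => e)); [|intros; apply EB_unfold; left; auto].
  intros e Hnv. split; [exact Hnv|]. eauto.
Qed.

Lemma bVl_relabel A B p q m (v1 v2 : expr Actor Lock) W :
  (forall v1 v2 W, bVr LP Att m (prevb m) A v1 v2 W -> bVr LP Att m (prevb m) B v1 v2 W) ->
  rsubty A B -> (att_le Att q -> att_le Att p) ->
  bVl LP Att m (prevb m) (Lab A p) v1 v2 W -> bVl LP Att m (prevb m) (Lab B q) v1 v2 W.
Proof.
  simpl. intros Hbin HAB Hqp Hv.
  destruct (classic (att_le Att q)) as [Hlow | Hhigh].
  - left. split; [exact Hlow|].
    destruct Hv as [[_ Hb] | [Hhigh _]]; [exact (Hbin _ _ _ Hb)|].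
    exfalso. exact (Hhigh (Hqp Hlow)).
  - right. split; [exact Hhigh|]. rewrite !VRu_unfold.
    assert (uVr m (prevu m) A v1 (th1 W) /\ uVr m (prevu m) A v2 (th2 W)) as [U1 U2].
    { destruct Hv as [[_ Hb] | (_ & U1 & U2)]; [eapply (proj1 bV_unary); eauto|].
      rewrite !VRu_unfold in *. auto. }
    split; eapply (proj2 uV_subty); eauto.
Qed.

Lemma bV_subty :
  (forall t t', subty t t' -> forall m (v1 v2 : expr Actor Lock) W,
      bVl LP Att m (prevb m) t v1 v2 W -> bVl LP Att m (prevb m) t' v1 v2 W) /\
  (forall A B, rsubty A B -> forall m (v1 v2 : expr Actor Lock) W,
      bVr LP Att m (prevb m) A v1 v2 W -> bVr LP Att m (prevb m) B v1 v2 W).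
Proof.
  apply subtyping_mutind; intros.
  - apply (bVl_relabel (A := A) (p := p)); auto. intros Hlow. eapply policy_le_trans; eauto.
  - exact H.
  - exact H.
  - exact H.
  - destruct v1, v2; simpl in *; try contradiction. destruct H1; eauto.
  - destruct v1, v2; simpl in *; try contradiction; eauto.
  - destruct v1, v2; simpl in *; try contradiction.
    destruct H1 as (Hx & Hf & Hu1 & Hu2).
    assert (HFun : rsubty (TFun t1 Sg p t2) (TFun t0 Sg' p' t3)) by (constructor; auto).
    rewrite !VRu_unfold in *. split; [exact Hx|].
    split; [|split; eapply (proj2 uV_subty); eauto].
    intros W' m' u1 u2 S1 S2 HW Hlt Hu HS1 HS2.
    specialize (Hf W' m' u1 u2 S1 S2 HW Hlt).
    rewrite (@prevb_lt m m') in Hf, Hu |- * by lia.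
    apply (@EB_weaken t2 t3); [intros k w1 w2 W0; rewrite !VB_unfold; auto|].
    apply Hf; [|intros lk Hlk; auto ..].
    change (VB LP Att t1 u1 u2 W' m'). change (VB LP Att t0 u1 u2 W' m') in Hu.
    rewrite VB_unfold in *. auto.
Qed.

Lemma VB_relabel A B p q v1 v2 W m :
  rsubty A B -> (att_le Att q -> att_le Att p) ->
  VB LP Att (Lab A p) v1 v2 W m -> VB LP Att (Lab B q) v1 v2 W m.
Proof.
  rewrite !VB_unfold. intros HAB. apply bVl_relabel; [|exact HAB].
  intros. eapply (proj2 bV_subty); eauto.
Qed.

Lemma value_no_step (v : expr Actor Lock) Sg S e' S' w Sg' :
  is_val v -> ~ step v Sg S e' S' w Sg'.
Proof. intros Hv Hs. induction Hs; simpl in *; tauto. Qed.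

Lemma step_new_val (v : expr Actor Lock) t Sg S e' S' w Sg' :
  is_val v -> step (ENew v t) Sg S e' S' w Sg' ->
  exists l, e' = @ELoc Actor Lock l /\ S' = (l, (v, t)) :: S /\ w = OWr l t v /\ Sg' = Sg /\
            lookup S l = None.
Proof.
  intros Hv Hs. inversion Hs; subst.
  - exfalso. eapply value_no_step; eauto.
  - eexists; repeat split; eauto.
Qed.

Lemma new_steps_reflected t : steps_reflected (fun e => ENew e t).
Proof.
  intros e Hnv. split; [simpl; tauto|].
  intros Sg S e' S' w Sg' Hs. inversion Hs; subst; [eauto | contradiction].
Qed.

Lemma SatB_fresh1 S1 S2 m W l :
  SatB LP Att S1 S2 m W -> lookup S1 l = None -> lookup (th1 W) l = None.
Proof.
  rewrite SatB_unfold. intros [Hdom _] Hl.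
  destruct (lookup (th1 W) l) eqn:E; [|reflexivity]. exfalso. apply (Hdom l); congruence.
Qed.

Lemma SatB_fresh2 S1 S2 m W l :
  SatB LP Att S1 S2 m W -> lookup S2 l = None -> lookup (th2 W) l = None.
Proof.
  rewrite SatB_unfold. intros (_ & Hdom & _) Hl.
  destruct (lookup (th2 W) l) eqn:E; [|reflexivity]. exfalso. apply (Hdom l); congruence.
Qed.

Lemma att_le_bot : att_le Att (@bot_policy Actor Lock).
Proof.
  intros S a _. exists (fun _ => False). split; [intros l f; exact f | intros l []].
Qed.

Lemma att_le_restrict (p : policy Actor Lock) Sg :
  locks_le_att Att Sg -> att_le Att (pol_restrict p Sg) -> att_le Att p.
Proof.
  intros HSg Hr S a HA.
  destruct (Hr S a HA) as (S1 & (S0 & Hp & HS1) & Hsub).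
  exists S0. split; [exact Hp|]. intros l Hl.
  destruct (classic (Sg l)) as [Hin | Hout].
  - apply (proj1 HA), HSg, Hin.
  - apply Hsub, HS1. auto.
Qed.

Lemma VB_ref_bot t l1 l2 W m :
  lookup (th1 W) l1 = Some t -> lookup (th2 W) l2 = Some t -> In (l1, l2) (beta W) ->
  VB LP Att (Lab (TRef t) (@bot_policy Actor Lock))
    (@ELoc Actor Lock l1) (@ELoc Actor Lock l2) W m.
Proof.
  intros H1 H2 Hb. rewrite VB_unfold. simpl. left. split; [exact att_le_bot | auto].
Qed.

Section Allocation.
Variables (W : world Actor Lock) (l1 l2 : loc) (t : lty Actor Lock).
Hypotheses (fresh1 : lookup (th1 W) l1 = None) (fresh2 : lookup (th2 W) l2 = None).

Lemma world_alloc_dom a b : In (a, b) ((l1, l2) :: beta W) ->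
  lookup ((l1, t) :: th1 W) a <> None /\ lookup ((l2, t) :: th2 W) b <> None.
Proof.
  intros [E | I].
  - injection E as <- <-. simpl. rewrite !Nat.eqb_refl. split; discriminate.
  - destruct (beta_dom W a b I). now rewrite !lookup_cons_other.
Qed.

Lemma world_alloc_fun a b b' :
  In (a, b) ((l1, l2) :: beta W) -> In (a, b') ((l1, l2) :: beta W) -> b = b'.
Proof.
  intros [E | I] [E' | I'].
  - congruence.
  - injection E as <- <-. exfalso. now destruct (beta_dom W _ _ I').
  - injection E' as <- <-. exfalso. now destruct (beta_dom W _ _ I).
  - eapply beta_fun; eauto.
Qed.

Lemma world_alloc_inj a a' b :
  In (a, b) ((l1, l2) :: beta W) -> In (a', b) ((l1, l2) :: beta W) -> a = a'.
Proof.
  intros [E | I] [E' | I'].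
  - congruence.
  - injection E as <- <-. exfalso. now destruct (beta_dom W _ _ I').
  - injection E' as <- <-. exfalso. now destruct (beta_dom W _ _ I).
  - eapply beta_inj; eauto.
Qed.

Definition world_alloc : world Actor Lock :=
  mkWorld ((l1, t) :: th1 W) ((l2, t) :: th2 W) ((l1, l2) :: beta W)
    world_alloc_dom world_alloc_fun world_alloc_inj.

Lemma world_alloc_le : world_le W world_alloc.
Proof.
  split; [|split]; simpl.
  - intros a x Ha. rewrite lookup_cons_other; congruence.
  - intros a x Ha. rewrite lookup_cons_other; congruence.
  - auto.
Qed.

Lemma VB_world_alloc_locs m :
  VB LP Att (Lab (TRef t) (@bot_policy Actor Lock))
    (@ELoc Actor Lock l1) (@ELoc Actor Lock l2) world_alloc m.
Proof. apply VB_ref_bot; simpl; rewrite ?Nat.eqb_refl; auto. Qed.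

Lemma SatB_alloc S1 S2 v1 v2 m :
  SatB LP Att S1 S2 m W -> lookup S1 l1 = None -> lookup S2 l2 = None ->
  VB LP Att t v1 v2 world_alloc m ->
  SatB LP Att ((l1, (v1, t)) :: S1) ((l2, (v2, t)) :: S2) m world_alloc.
Proof.
  rewrite !SatB_unfold. intros (D1 & D2 & T1 & T2 & B & R) N1 N2 Hv. simpl.
  split; [|split; [|split; [|split; [|split]]]].
  - intros l Hl. simpl in *. destruct (l1 =? l); [discriminate | auto].
  - intros l Hl. simpl in *. destruct (l2 =? l); [discriminate | auto].
  - intros l x Hl. simpl in *. destruct (l1 =? l); [injection Hl as <-; eauto | auto].
  - intros l x Hl. simpl in *. destruct (l2 =? l); [injection Hl as <-; eauto | auto].
  - exact world_alloc_dom.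
  - intros a b [E | I].
    + injection E as <- <-. exists t, v1, v2, t, t. simpl. rewrite !Nat.eqb_refl. auto.
    + destruct (R a b I) as (t0 & u1 & u2 & t1 & t2 & L1 & L2 & L3 & L4 & L5).
      exists t0, u1, u2, t1, t2. cbn [world_alloc th1 th2].
      rewrite !lookup_cons_other by congruence.
      repeat split; auto. eapply VB_world_mono; [exact world_alloc_le | exact L5].
Qed.

End Allocation.

Lemma VB_new_payload A B p q v1 v2 W m l1 l2 Sg Sg' Sg1 Sg2 :
  rsubty A B -> policy_le (pol_restrict p Sg) q -> policy_le (pol_restrict p Sg') q ->
  lsubset Sg Sg1 -> lsubset Sg' Sg2 ->
  obs_irrel LP Att (VB_at m) W (OWr l1 (Lab B q) v1) (OWr l2 (Lab B q) v2) \/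
  locks_le_att Att Sg1 \/ locks_le_att Att Sg2 ->
  VB LP Att (Lab A p) v1 v2 W m -> VB LP Att (Lab B q) v1 v2 W m.
Proof.
  intros HAB Hq Hq' HSg HSg' Hprem.
  destruct Hprem as [[[_ Hnw] | [Hhigh | [Hhigh | Hrel]]] | [Hlow | Hlow]].
  - exfalso. exact (Hnw I).
  - apply VB_relabel; [exact HAB|]. intros Hlowq. contradiction (Hhigh Hlowq).
  - apply VB_relabel; [exact HAB|]. intros Hlowq. contradiction (Hhigh Hlowq).
  - intros _. destruct Hrel as (l & l' & t & u & u' & E1 & E2 & Hu).
    injection E1; injection E2; intros; subst. exact Hu.
  - apply VB_relabel; [exact HAB|]. intros Hlowq.
    apply (@att_le_restrict p Sg); [intros s Hs; auto | exact (policy_le_trans Hq Hlowq)].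
  - apply VB_relabel; [exact HAB|]. intros Hlowq.
    apply (@att_le_restrict p Sg'); [intros s Hs; auto | exact (policy_le_trans Hq' Hlowq)].
Qed.

Lemma EB_new_values A B p q v1 v2 W Sg Sg' m :
  lock_equiv LP Att Sg Sg' ->
  rsubty A B -> policy_le (pol_restrict p Sg) q -> policy_le (pol_restrict p Sg') q ->
  VB LP Att (Lab A p) v1 v2 W m ->
  EB LP Att (Lab (TRef (Lab B q)) (@bot_policy Actor Lock))
    (ENew v1 (Lab B q)) (ENew v2 (Lab B q)) W Sg Sg' m.
Proof.
  intros Hlk HAB Hq Hq' Hv. destruct (VB_is_val Hv) as [iv1 iv2].
  apply EB_unfold. right. split; [exact Hlk|].
  intros Sg1 Sg2 W' m' S1 S2 HSg HSg' _ HW hm HS. left.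
  split; [simpl; tauto|]. split; [simpl; tauto|].
  intros e1' S1' w Sg1' e2' S2' w' Sg2' st1 st2 Hprem.
  destruct (step_new_val iv1 st1) as (l1 & -> & -> & -> & -> & N1).
  destruct (step_new_val iv2 st2) as (l2 & -> & -> & -> & -> & N2).
  pose (W'' := world_alloc (Lab B q) (SatB_fresh1 HS N1) (SatB_fresh2 HS N2)).
  assert (Hpayload : VB LP Att (Lab B q) v1 v2 W'' m').
  { eapply VB_world_mono; [apply world_alloc_le|].
    apply (VB_new_payload HAB Hq Hq' HSg HSg' Hprem).
    eapply VB_world_mono; [exact HW|]. eapply VB_down; [|exact Hv]. lia. }
  exists W''. split; [apply world_alloc_le|]. split; [|split].
  - apply SatB_alloc; assumption.
  - right; right. exists l1, l2, (Lab B q), v1, v2.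
    repeat split; [exact Hpayload | left; reflexivity].
  - apply EB_unfold. left. apply VB_world_alloc_locs.
Qed.

End LogicalRelations.

Lemma subty_lab_inv Actor Lock (A B : raw Actor Lock) p q :
  subty (Lab A p) (Lab B q) -> policy_le p q /\ rsubty A B.
Proof. intros H. inversion H; subst; auto. Qed.

Theorem mainTheorem5 (Actor Lock : Type) (LockPolicy : Lock -> policy Actor Lock)
  (Att : attacker Actor Lock) (W : world Actor Lock) (m : nat)
  (Sg Sg' : lockset Lock) (tau tau' : lty Actor Lock) (e e' : expr Actor Lock) :
  EB LockPolicy Att tau' e e' W Sg Sg' m ->
  lock_equiv LockPolicy Att Sg Sg' ->
  subty (lty_restrict tau' Sg) tau ->
  subty (lty_restrict tau' Sg') tau ->
  EB LockPolicy Att (Lab (TRef tau) (@bot_policy Actor Lock))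
     (ENew e tau) (ENew e' tau) W Sg Sg' m.
Proof.
  intros HE Hlk Hsub Hsub'.
  destruct tau' as [A p], tau as [B q].
  destruct (subty_lab_inv Hsub) as [Hq HAB], (subty_lab_inv Hsub') as [Hq' _].
  eapply (EB_frame (C := fun e0 => ENew e0 (Lab B q))); [apply new_steps_reflected | | exact HE].
  intros k v1 v2 W0. exact (EB_new_values Hlk HAB Hq Hq').
Qed.
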